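(* Consider the generic SURQT model (6) described in the context, and let \[ \mathbf{Q}_2=\mathbf{Q}_1-\mathrm{diag}\!\left(\frac{\theta_i}{\theta_i+\delta_i}\right)\frac{\partial\mathbf{f}(\mathbf 0)}{\partial\mathbf{x}}-\mathrm{diag}\,\mathbf{g}(\mathbf 1),\qquad \mathbf{Q}_1=\frac{\partial\mathbf{f}(\mathbf 0)}{\partial\mathbf{x}}-\mathbf{D}_\theta, \] where $\mathrm{diag}\,\mathbf{g}(\mathbf 1)=\mathrm{diag}(g_1^R(\mathbf 1),\dots,g_N^R(\mathbf 1))$. If $s(\mathbf{Q}_2)>0$, then for any solution $(\mathbf{R}(t),\mathbf{T}(t))$ with initial value in $\Omega$ and $\mathbf{R}(0)>\mathbf 0$ there is $c>0$ such that $\liminf_{t\to\infty}R_i(t)\ge c$ for all $1\le i\le N$ (the rumor is persistent).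
   Context: $V=\{1,\dots,N\}$; $G_R=(V,E_R)$ and $G_T=(V,E_T)$ are strongly connected directed graphs. $\theta_i>0,\delta_i>0$; $\mathbf{D}_\theta=\mathrm{diag}(\theta_i)$. The functions $f_i^T,g_i^R:\mathbb{R}^N\to\mathbb{R}$ satisfy: (C1) $f_i^T$ depends on $x_j$ iff $(i,j)\in E_R$, $g_i^R$ depends on $x_j$ iff $(i,j)\in E_T$; (C2) $f_i^T(\mathbf 0)=g_i^R(\mathbf 0)=0$; (C3) twice continuously differentiable; (C4) strictly increasing in each argument; (C5) concave. $\mathbf{f}=(f_1^T,\dots,f_N^T)^T$ with Jacobian $\frac{\partial\mathbf{f}(\mathbf 0)}{\partial\mathbf x}$ at the origin; $\mathbf 1=(1,\dots,1)$. $s(\mathbf{A})$ is the maximum real part of an eigenvalue of $\mathbf{A}$. The generic SURQT model (6) is, for $i=1,\dots,N$, \[ \frac{dR_i}{dt}=T_i f_i^T(\mathbf{R})-R_i g_i^R(\mathbf{T})-\theta_iR_i,\qquad \frac{dT_i}{dt}=R_i g_i^R(\mathbf{T})-T_i f_i^T(\mathbf{R})+\delta_i(1-R_i-T_i), \] on $\Omega=\{(x_1,\dots,x_{2N})\in\mathbb{R}_+^{2N}: x_i+x_{N+i}\le1\}$. $\mathbf{R}(0)>\mathbf 0$ means every component is positive. *)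

From Stdlib Require Import Reals Lra Relations.
Open Scope R_scope.

(* Vectors of R^N are represented as functions nat -> R; only the
   coordinates 0..N-1 are meaningful (vertex i of the paper = index i-1). *)
Definition vec := nat -> R.

Fixpoint vsum (n : nat) (f : nat -> R) : R :=
  match n with
  | O => 0
  | S m => vsum m f + f m
  end.

Definition upd (x : vec) (j : nat) (t : R) : vec :=
  fun k => if Nat.eqb k j then t else x k.

Definition zerov : vec := fun _ => 0.
Definition onev : vec := fun _ => 1.

Definition strongly_connected (N : nat) (E : nat -> nat -> Prop) : Prop :=
  forall i j, (i < N)%nat -> (j < N)%nat ->
    clos_refl_trans nat (fun a b => (a < N)%nat /\ (b < N)%nat /\ E a b) i j.

Definition depends_on (F : vec -> R) (j : nat) : Prop :=
  exists x t, F (upd x j t) <> F x.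

Definition partial_at (F : vec -> R) (j : nat) (x : vec) (l : R) : Prop :=
  derivable_pt_lim (fun t => F (upd x j t)) (x j) l.

Definition contN (N : nat) (F : vec -> R) : Prop :=
  forall x eps, eps > 0 -> exists d, d > 0 /\
    forall y, (forall k, (k < N)%nat -> Rabs (y k - x k) < d) ->
      Rabs (F y - F x) < eps.

Definition C2N (N : nat) (F : vec -> R) : Prop :=
  contN N F /\
  exists (D1 : nat -> vec -> R) (D2 : nat -> nat -> vec -> R),
    (forall j x, (j < N)%nat -> partial_at F j x (D1 j x)) /\
    (forall j, (j < N)%nat -> contN N (D1 j)) /\
    (forall j k x, (j < N)%nat -> (k < N)%nat -> partial_at (D1 j) k x (D2 j k x)) /\
    (forall j k, (j < N)%nat -> (k < N)%nat -> contN N (D2 j k)).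

Definition strictly_increasing_args (N : nat) (E : nat -> nat -> Prop) (i : nat)
  (F : vec -> R) : Prop :=
  forall j x t s, (j < N)%nat -> E i j -> t < s -> F (upd x j t) < F (upd x j s).

Definition concave (F : vec -> R) : Prop :=
  forall x y l, 0 <= l <= 1 ->
    l * F x + (1 - l) * F y <= F (fun k => l * x k + (1 - l) * y k).

Definition admissible (N : nat) (E : nat -> nat -> Prop) (F : nat -> vec -> R) : Prop :=
  forall i, (i < N)%nat ->
    (forall j, depends_on (F i) j <-> ((j < N)%nat /\ E i j)) /\
    F i zerov = 0 /\
    C2N N (F i) /\
    strictly_increasing_args N E i (F i) /\
    concave (F i).

(* s(A) > 0 : A (N x N real matrix) has an eigenvalue a + i b with a > 0,
   i.e. a nonzero complex eigenvector x + i y with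
   A x = a x - b y,  A y = b x + a y. *)
Definition spectral_abscissa_pos (N : nat) (A : nat -> nat -> R) : Prop :=
  exists a b (x y : vec), a > 0 /\
    (exists k, (k < N)%nat /\ (x k <> 0 \/ y k <> 0)) /\
    (forall i, (i < N)%nat ->
       vsum N (fun j => A i j * x j) = a * x i - b * y i /\
       vsum N (fun j => A i j * y j) = b * x i + a * y i).

Definition Q2 (N : nat) (J : nat -> nat -> R) (theta delta : nat -> R)
  (g : nat -> vec -> R) : nat -> nat -> R :=
  fun i j => (J i j - (if Nat.eqb i j then theta i else 0))
             - theta i / (theta i + delta i) * J i j
             - (if Nat.eqb i j then g i onev else 0).

Definition is_solution (N : nat) (f g : nat -> vec -> R) (theta delta : nat -> R)
  (Rr Tt : R -> vec) : Prop :=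
  (forall i, (i < N)%nat ->
     forall eps, eps > 0 -> exists d, d > 0 /\ forall t, 0 <= t < d ->
       Rabs (Rr t i - Rr 0 i) < eps /\ Rabs (Tt t i - Tt 0 i) < eps) /\
  (forall i t, (i < N)%nat -> t > 0 ->
     derivable_pt_lim (fun s => Rr s i) t
       (Tt t i * f i (Rr t) - Rr t i * g i (Tt t) - theta i * Rr t i) /\
     derivable_pt_lim (fun s => Tt s i) t
       (Rr t i * g i (Tt t) - Tt t i * f i (Rr t)
        + delta i * (1 - Rr t i - Tt t i))).

From Stdlib Require Import Reals Lra Lia List Relations Rgeom Classical FunctionalExtensionality.
Open Scope R_scope.

(* Everything rests on one comparison principle for finitely many functions: if each starts
   positive and has positive derivative whenever it touches zero while the others are
   nonnegative, all stay positive.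

   First, [Omega] is forward invariant: on [[0, tau]] the faces of [Omega] pushed outwards by a
   slack [eps e^(L t)] are never reached once [L] dominates the bounds of [f] and [g] near
   [Omega] (concavity controls them just below the origin); letting [eps] tend to 0 gives
   invariance.  Consequently [R_i] stays positive and [R_i + T_i] eventually exceeds
   [delta_i / (theta_i + delta_i) - eps].

   Second, [Q2] is a Metzler matrix, so the moduli of a complex eigenvector for an eigenvalue
   with positive real part give [w >= 0], [w <> 0] with [Q2 w >= a w], [a > 0].  Since
   [f(c w) = c J w + o(c)], for small [c] and a late enough starting time no coordinate of
   [R - c w] can reach zero, so [R_k] persists for some [k].

   Third, along an edge [(a, b)] of [G_R], persistence of [R_b] gives [f_a(R) >= f_a(c e_b) > 0],
   and a linear differential inequality for [R_a] propagates persistence to [a]; strong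
   connectivity of [G_R] then reaches every vertex. *)

Lemma vsum_ext n f g : (forall j, (j < n)%nat -> f j = g j) -> vsum n f = vsum n g.
Proof.
  induction n as [|n IH]; intros H; simpl; [reflexivity|].
  rewrite IH by (intros; apply H; lia); rewrite H by lia; reflexivity.
Qed.

Lemma vsum_plus n f g : vsum n (fun j => f j + g j) = vsum n f + vsum n g.
Proof. induction n; simpl; lra. Qed.

Lemma vsum_minus n f g : vsum n (fun j => f j - g j) = vsum n f - vsum n g.
Proof. induction n; simpl; lra. Qed.

Lemma vsum_scal n c f : vsum n (fun j => c * f j) = c * vsum n f.
Proof. induction n; simpl; lra. Qed.

Lemma vsum_delta n i c : (i < n)%nat ->
  vsum n (fun j => if Nat.eqb i j then c else 0) = c.
Proof.
  induction n as [|n IH]; intros Hi; [lia|]; simpl.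
  destruct (Nat.eqb_spec i n) as [->|Hne].
  - rewrite (vsum_ext _ _ (fun _ => 0)).
    + clear; induction n; simpl; lra.
    + intros j Hj; destruct (Nat.eqb_spec n j); [lia|reflexivity].
  - rewrite IH by lia; lra.
Qed.

Lemma vsum_le n f g : (forall j, (j < n)%nat -> f j <= g j) -> vsum n f <= vsum n g.
Proof.
  induction n as [|n IH]; intros H; simpl; [lra|].
  specialize (IH (fun j Hj => H j ltac:(lia))); specialize (H n ltac:(lia)); lra.
Qed.

Lemma vsum_nonneg n f : (forall j, (j < n)%nat -> 0 <= f j) -> 0 <= vsum n f.
Proof.
  intros H; replace 0 with (vsum n (fun _ => 0)) by (clear; induction n; simpl; lra).
  now apply vsum_le.
Qed.

Lemma vsum_ge_term n f k : (forall j, (j < n)%nat -> 0 <= f j) -> (k < n)%nat ->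
  f k <= vsum n f.
Proof.
  induction n as [|n IH]; intros H Hk; simpl; [lia|].
  destruct (Nat.eq_dec k n) as [->|Hne].
  - pose proof (vsum_nonneg n f (fun j Hj => H j ltac:(lia))); lra.
  - specialize (IH (fun j Hj => H j ltac:(lia)) ltac:(lia)); specialize (H n ltac:(lia)); lra.
Qed.

Definition finite_pred {I : Type} (P : I -> Prop) : Prop :=
  exists l : list I, forall x, P x -> In x l.

Lemma finite_pred_lt n : finite_pred (fun k => (k < n)%nat).
Proof. exists (seq 0 n); intros k Hk; apply in_seq; lia. Qed.

Lemma uniform_positive {I : Type} (P : I -> Prop) (Q : I -> R -> Prop) :
  finite_pred P ->
  (forall x d d', 0 < d' <= d -> Q x d -> Q x d') ->
  (forall x, P x -> exists d, d > 0 /\ Q x d) ->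
  exists d, d > 0 /\ forall x, P x -> Q x d.
Proof.
  intros [l Hl] Hdown Hex.
  enough (H : exists d, d > 0 /\ forall x, In x l -> P x -> Q x d).
  { destruct H as [d [Hd HQ]]; exists d; split; auto. }
  clear Hl; induction l as [|y l [d [Hd HQ]]].
  - exists 1; split; [lra|]; intros _ [].
  - destruct (classic (P y)) as [Py|Py].
    + destruct (Hex y Py) as [dy [Hdy HQy]].
      exists (Rmin d dy); split; [now apply Rmin_glb_lt|].
      pose proof (Rmin_l d dy); pose proof (Rmin_r d dy).
      assert (0 < Rmin d dy) by now apply Rmin_glb_lt.
      intros x [<-|Hx] Px; [apply (Hdown _ dy)|apply (Hdown _ d)]; auto; lra.
    + exists d; split; auto; intros x [<-|Hx] Px; [contradiction|auto].
Qed.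

Lemma uniform_eventually {I : Type} (P : I -> Prop) (Q : I -> R -> Prop) :
  finite_pred P ->
  (forall x, P x -> exists T, forall t, t >= T -> Q x t) ->
  exists T, forall x, P x -> forall t, t >= T -> Q x t.
Proof.
  intros [l Hl] Hex.
  enough (H : exists T, forall x, In x l -> P x -> forall t, t >= T -> Q x t).
  { destruct H as [T HT]; exists T; auto. }
  clear Hl; induction l as [|y l [T HT]].
  - exists 0; intros _ [].
  - destruct (classic (P y)) as [Py|Py].
    + destruct (Hex y Py) as [Ty HTy].
      exists (Rmax T Ty); pose proof (Rmax_l T Ty); pose proof (Rmax_r T Ty).
      intros x [<-|Hx] Px t Ht; [apply HTy|apply HT]; auto; lra.
    + exists T; intros x [<-|Hx] Px; [contradiction|auto].
Qed.

Lemma uniform_lower_bound {I : Type} (P : I -> Prop) (v : I -> R) :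
  finite_pred P -> (forall x, P x -> v x > 0) ->
  exists m, m > 0 /\ forall x, P x -> m <= v x.
Proof.
  intros Hfin Hpos.
  apply (uniform_positive P (fun x d => d <= v x)); auto.
  - intros; lra.
  - intros x Px; exists (v x); split; [auto|lra].
Qed.

Lemma exists_small_scale (l : list (R * R)) :
  (forall kb, In kb l -> fst kb > 0 /\ snd kb > 0) ->
  exists c, c > 0 /\ forall kb, In kb l -> c * fst kb <= snd kb.
Proof.
  intros Hl.
  destruct (uniform_positive (fun kb => In kb l) (fun kb c => fst kb > 0 -> c * fst kb <= snd kb))
    as [c [Hc Hq]].
  - exists l; auto.
  - intros [k b] c c' Hc' Hq Hk; simpl in *; specialize (Hq Hk); nra.
  - intros [k b] Hkb; destruct (Hl _ Hkb) as [Hk Hb]; simpl in *.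
    exists (b / k); split; [apply Rdiv_lt_0_compat; lra|intros _; right; field; lra].
  - exists c; split; auto; intros kb Hkb; apply Hq, Hl; auto.
Qed.

Definition right_cont (h : R -> R) (t0 : R) : Prop :=
  forall e, e > 0 -> exists d, d > 0 /\
    forall t, t0 <= t < t0 + d -> Rabs (h t - h t0) < e.

Lemma continuity_pt_eps h x : continuity_pt h x ->
  forall e, e > 0 -> exists d, d > 0 /\ forall u, Rabs (u - x) < d -> Rabs (h u - h x) < e.
Proof.
  intros Hc e He; destruct (Hc e He) as [d [Hd Hq]]; exists d; split; auto.
  intros u Hu; destruct (Req_dec u x) as [->|Hne].
  - rewrite Rminus_diag, Rabs_R0; lra.
  - apply (Hq u); split; [split; [exact I|auto]|exact Hu].
Qed.

Lemma derivable_pt_lim_continuity_pt h x l : derivable_pt_lim h x l -> continuity_pt h x.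
Proof. intros H; apply derivable_continuous_pt; exists l; exact H. Qed.

Lemma continuity_pt_right_cont h x : continuity_pt h x -> right_cont h x.
Proof.
  intros Hc e He; destruct (continuity_pt_eps h x Hc e He) as [d [Hd Hq]].
  exists d; split; auto; intros t Ht; apply Hq; rewrite Rabs_pos_eq; lra.
Qed.

Lemma right_cont_plus h k t0 : right_cont h t0 -> right_cont k t0 ->
  right_cont (fun t => h t + k t) t0.
Proof.
  intros Hh Hk e He.
  destruct (Hh (e/2) ltac:(lra)) as [d1 [Hd1 H1]], (Hk (e/2) ltac:(lra)) as [d2 [Hd2 H2]].
  exists (Rmin d1 d2); split; [now apply Rmin_glb_lt|]; intros t Ht.
  pose proof (Rmin_l d1 d2); pose proof (Rmin_r d1 d2).
  specialize (H1 t ltac:(lra)); specialize (H2 t ltac:(lra)).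
  replace (h t + k t - (h t0 + k t0)) with ((h t - h t0) + (k t - k t0)) by ring.
  pose proof (Rabs_triang (h t - h t0) (k t - k t0)); lra.
Qed.

Lemma right_cont_scal c h t0 : right_cont h t0 -> right_cont (fun t => c * h t) t0.
Proof.
  intros Hh e He.
  destruct (Hh (e / (Rabs c + 1))) as [d [Hd Hq]].
  { apply Rdiv_lt_0_compat; [lra|pose proof (Rabs_pos c); lra]. }
  exists d; split; auto; intros t Ht; specialize (Hq t Ht).
  rewrite <- Rmult_minus_distr_l, Rabs_mult.
  pose proof (Rabs_pos c); pose proof (Rabs_pos (h t - h t0)).
  apply Rle_lt_trans with ((Rabs c + 1) * Rabs (h t - h t0)); [nra|].
  apply (Rmult_lt_compat_l (Rabs c + 1)) in Hq; [|lra].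
  replace ((Rabs c + 1) * (e / (Rabs c + 1))) with e in Hq by (field; lra); exact Hq.
Qed.

Lemma right_cont_const c t0 : right_cont (fun _ => c) t0.
Proof. intros e He; exists 1; split; [lra|]; intros; rewrite Rminus_diag, Rabs_R0; lra. Qed.

Lemma right_cont_minus h k t0 : right_cont h t0 -> right_cont k t0 ->
  right_cont (fun t => h t - k t) t0.
Proof.
  intros Hh Hk.
  replace (fun t => h t - k t) with (fun t => h t + (-1) * k t)
    by (apply functional_extensionality; intros; ring).
  apply right_cont_plus, right_cont_scal; auto.
Qed.

Lemma derivable_pt_lim_touch h t0 t l : derivable_pt_lim h t l -> t0 < t ->
  (forall s, t0 <= s < t -> h s > 0) -> h t = 0 -> l <= 0.
Proof.
  intros Hd Ht Hpos H0; apply Rnot_lt_le; intros Hl.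
  destruct (Hd l Hl) as [[del Hdel] Hq]; simpl in Hq.
  set (u := - Rmin (del / 2) ((t - t0) / 2)).
  assert (Hm : 0 < Rmin (del / 2) ((t - t0) / 2)) by (apply Rmin_glb_lt; lra).
  pose proof (Rmin_l (del / 2) ((t - t0) / 2)); pose proof (Rmin_r (del / 2) ((t - t0) / 2)).
  specialize (Hq u ltac:(unfold u; lra) ltac:(unfold u; rewrite Rabs_Ropp, Rabs_pos_eq; lra)).
  rewrite H0, Rminus_0_r in Hq.
  assert (Hp : h (t + u) > 0) by (apply Hpos; unfold u; lra).
  assert (h (t + u) / u < 0).
  { apply Rmult_pos_neg; [lra|apply Rinv_lt_0_compat; unfold u; lra]. }
  apply Rabs_def2 in Hq; lra.
Qed.

Lemma continuity_pt_left_nonneg h t0 t : continuity_pt h t -> t0 < t ->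
  (forall s, t0 <= s < t -> h s > 0) -> h t >= 0.
Proof.
  intros Hc Ht Hpos; apply Rnot_lt_ge; intros Hneg.
  destruct (continuity_pt_eps h t Hc (- h t) ltac:(lra)) as [d [Hd Hq]].
  set (u := Rmax t0 (t - d / 2)).
  pose proof (Rmax_l t0 (t - d / 2)); pose proof (Rmax_r t0 (t - d / 2)).
  assert (u < t) by (apply Rmax_lub_lt; lra).
  specialize (Hpos u ltac:(unfold u in *; lra)).
  specialize (Hq u ltac:(rewrite Rabs_left; unfold u in *; lra)).
  apply Rabs_def2 in Hq; lra.
Qed.

Lemma real_induction (a b : R) (Q : R -> Prop) :
  Q a ->
  (forall x, a <= x < b -> (forall y, a <= y <= x -> Q y) ->
     exists z, x < z /\ forall y, x <= y <= z -> Q y) ->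
  (forall x, a < x <= b -> (forall y, a <= y < x -> Q y) -> Q x) ->
  forall x, a <= x <= b -> Q x.
Proof.
  intros Ha Hstep Hclose x Hx.
  set (G := fun s => a <= s <= b /\ forall y, a <= y <= s -> Q y).
  assert (HGa : G a) by (split; [lra|intros y Hy; replace y with a by lra; exact Ha]).
  destruct (completeness G) as [s [Hub Hlub]].
  { exists b; intros u [Hu _]; lra. }
  { exists a; exact HGa. }
  assert (Has : a <= s) by (apply Hub, HGa).
  assert (Hsb : s <= b) by (apply Hlub; intros u [Hu _]; lra).
  assert (Hbelow : forall y, a <= y < s -> Q y).
  { intros y Hy; apply NNPP; intros HQ.
    assert (s <= y); [|lra].
    apply Hlub; intros u [Hu Hall]; apply Rnot_lt_le; intros Hyu; apply HQ, Hall; lra. }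
  assert (HGs : G s).
  { split; [lra|]; intros y Hy.
    destruct (Rle_lt_or_eq_dec y s ltac:(lra)) as [Hys| ->]; [apply Hbelow; lra|].
    destruct (Rle_lt_or_eq_dec a s Has) as [Has'| <-]; [apply Hclose|]; auto; lra. }
  destruct (Rle_lt_or_eq_dec s b Hsb) as [Hlt| <-]; [|apply HGs; lra].
  exfalso; destruct (Hstep s ltac:(lra) (proj2 HGs)) as [z [Hz Hzq]].
  assert (G (Rmin z b)).
  { pose proof (Rmin_l z b); pose proof (Rmin_r z b).
    assert (s <= Rmin z b) by (apply Rmin_glb; lra); split; [lra|].
    intros y Hy; destruct (Rlt_le_dec y s); [apply Hbelow; lra|apply Hzq; lra]. }
  assert (s < Rmin z b) by (apply Rmin_glb_lt; lra).
  specialize (Hub _ H); lra.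
Qed.

Section Barrier.
Variables (I : Type) (P : I -> Prop) (h dh : I -> R -> R) (t0 tau : R).
Hypothesis Hfin : finite_pred P.
Hypothesis Hinit : forall x, P x -> h x t0 > 0.
Hypothesis Hrcont : forall x, P x -> right_cont (h x) t0.
Hypothesis Hderiv : forall x t, P x -> t0 < t <= tau -> derivable_pt_lim (h x) t (dh x t).
Hypothesis Htouch : forall t, t0 < t <= tau -> (forall y, P y -> h y t >= 0) ->
  forall x, P x -> h x t = 0 -> dh x t > 0.

Lemma barrier_right_cont x t : P x -> t0 <= t < tau -> right_cont (h x) t.
Proof.
  intros Px Ht; destruct (Rle_lt_or_eq_dec t0 t ltac:(lra)) as [Hlt| <-]; auto.
  apply continuity_pt_right_cont, (derivable_pt_lim_continuity_pt _ _ (dh x t)), Hderiv; auto; lra.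
Qed.

Lemma barrier : forall t, t0 <= t <= tau -> forall x, P x -> h x t > 0.
Proof.
  apply (real_induction t0 tau (fun t => forall x, P x -> h x t > 0)); [exact Hinit| |].
  - intros t Ht Hpos.
    destruct (uniform_positive P (fun x d => forall u, t <= u < t + d -> h x u > 0))
      as [d [Hd Hq]]; auto.
    + intros x d d' Hd' Hq u Hu; apply Hq; lra.
    + intros x Px; specialize (Hpos t ltac:(lra) x Px).
      destruct (barrier_right_cont x t Px Ht (h x t) Hpos) as [d [Hd Hq]].
      exists d; split; auto; intros u Hu; specialize (Hq u Hu); apply Rabs_def2 in Hq; lra.
    + exists (t + d / 2); split; [lra|]; intros y Hy x Px; apply Hq; auto; lra.
  - intros t Ht Hpos.
    assert (Hnn : forall y, P y -> h y t >= 0).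
    { intros y Py; apply (continuity_pt_left_nonneg _ t0); [|lra|intros; apply Hpos; auto].
      apply (derivable_pt_lim_continuity_pt _ _ (dh y t)), Hderiv; auto. }
    intros x Px; destruct (Rge_gt_or_eq_dec _ _ (Hnn x Px)) as [|H0]; auto; exfalso.
    assert (Hd := derivable_pt_lim_touch _ t0 t _ (Hderiv x t Px Ht) ltac:(lra)
      (fun s Hs => Hpos s Hs x Px) H0).
    specialize (Htouch t Ht Hnn x Px H0); lra.
Qed.

End Barrier.

Lemma barrier_scalar (h dh : R -> R) (t0 tau : R) :
  h t0 > 0 -> right_cont h t0 ->
  (forall t, t0 < t <= tau -> derivable_pt_lim h t (dh t)) ->
  (forall t, t0 < t <= tau -> h t = 0 -> dh t > 0) ->
  forall t, t0 <= t <= tau -> h t > 0.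
Proof.
  intros H0 Hr Hd Ht t Htt.
  refine (barrier unit (fun _ => True) (fun _ => h) (fun _ => dh) t0 tau _ _ _ _ _ t Htt tt I);
    auto.
  exists (tt :: nil); intros [] _; left; reflexivity.
Qed.

Lemma derivable_pt_lim_exp_affine c L t0 x :
  derivable_pt_lim (fun s => c * exp (L * (s - t0))) x (L * (c * exp (L * (x - t0)))).
Proof.
  replace (L * (c * exp (L * (x - t0)))) with (c * (exp (L * (x - t0)) * L)) by ring.
  apply (derivable_pt_lim_scal (fun s => exp (L * (s - t0)))).
  apply (derivable_pt_lim_comp (fun s => L * (s - t0)) exp); [|apply derivable_pt_lim_exp].
  assert (H := derivable_pt_lim_scal (fun s => s - t0) L x (1 - 0)
    (derivable_pt_lim_minus id (fct_cte t0) x 1 0 (derivable_pt_lim_id x)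
      (derivable_pt_lim_const t0 x))).
  replace (L * (1 - 0)) with L in H by ring; exact H.
Qed.

Lemma right_cont_exp_affine c L t0 x : right_cont (fun s => c * exp (L * (s - t0))) x.
Proof.
  apply continuity_pt_right_cont, (derivable_pt_lim_continuity_pt _ _ _ (derivable_pt_lim_exp_affine c L t0 x)).
Qed.

Lemma exp_neg_le_inv s : 0 <= s -> exp (- s) <= / (1 + s).
Proof.
  intros Hs; rewrite exp_Ropp; apply Rinv_le_contravar; [lra|apply exp_ineq1_le].
Qed.

Lemma positive_of_rate_lower (u du : R -> R) (t0 beta : R) :
  0 <= beta -> u t0 > 0 -> right_cont u t0 ->
  (forall t, t > t0 -> derivable_pt_lim u t (du t)) ->
  (forall t, t > t0 -> u t > 0 -> du t >= - beta * u t) ->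
  forall t, t >= t0 -> u t > 0.
Proof.
  intros Hb H0 Hr Hd Hrate t Ht.
  set (m := - (u t0 / 2)); set (L := - (beta + 1)).
  assert (Hh : u t + m * exp (L * (t - t0)) > 0).
  { apply (barrier_scalar (fun s => u s + m * exp (L * (s - t0)))
      (fun s => du s + L * (m * exp (L * (s - t0)))) t0 t); [| | | |lra].
    - rewrite Rminus_diag, Rmult_0_r, exp_0; unfold m; lra.
    - apply right_cont_plus; [exact Hr|apply right_cont_exp_affine].
    - intros s Hs; apply (derivable_pt_lim_plus u); [apply Hd; lra|].
      apply derivable_pt_lim_exp_affine.
    - intros s Hs Hz; unfold m, L in *.
      set (e := exp (- (beta + 1) * (s - t0))) in *.
      assert (He : 0 < e) by apply exp_pos.
      assert (Hus : u s = u t0 / 2 * e) by lra.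
      specialize (Hrate s ltac:(lra) ltac:(nra)).
      rewrite Hus in Hrate; nra. }
  pose proof (exp_pos (L * (t - t0))); unfold m in Hh; nra.
Qed.

Lemma eventually_above_of_rate_lower (u du : R -> R) (t0 alpha beta : R) :
  beta > 0 -> right_cont u t0 ->
  (forall t, t > t0 -> derivable_pt_lim u t (du t)) ->
  (forall t, t > t0 -> u t < alpha / beta -> du t >= alpha - beta * u t) ->
  forall eps, eps > 0 -> exists T, forall t, t >= T -> u t > alpha / beta - eps.
Proof.
  intros Hb Hr Hd Hrate eps Heps.
  set (M := Rabs (alpha / beta - u t0)).
  assert (HM : alpha / beta - u t0 <= M /\ 0 <= M) by (split; [apply Rle_abs|apply Rabs_pos]).
  set (c := eps / 2 - alpha / beta).
  assert (Hbarrier : forall t, t >= t0 -> u t + c + M * exp (- beta * (t - t0)) > 0).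
  { intros t Ht.
    apply (barrier_scalar (fun s => u s + c + M * exp (- beta * (s - t0)))
      (fun s => du s + 0 + - beta * (M * exp (- beta * (s - t0)))) t0 t); [| | | |lra].
    - rewrite Rminus_diag, Rmult_0_r, exp_0; unfold c; lra.
    - apply right_cont_plus; [apply right_cont_plus|]; auto using right_cont_const, right_cont_exp_affine.
    - intros s Hs.
      apply (derivable_pt_lim_plus (fun s => u s + c)); [|apply derivable_pt_lim_exp_affine].
      apply (derivable_pt_lim_plus u (fct_cte c)); [apply Hd; lra|apply derivable_pt_lim_const].
    - intros s Hs Hz; unfold c in *.
      set (e := exp (- beta * (s - t0))) in *.
      assert (He : 0 < e) by apply exp_pos.
      assert (HMe : 0 <= M * e) by nra.
      specialize (Hrate s ltac:(lra) ltac:(lra)).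
      replace alpha with (beta * (alpha / beta)) in Hrate by (field; lra); nra. }
  exists (t0 + 2 * M / (beta * eps)); intros t Ht.
  assert (Hs : 2 * M / (beta * eps) <= t - t0) by lra.
  assert (H2M : 0 <= 2 * M / (beta * eps)).
  { apply Rmult_le_pos; [lra|left; apply Rinv_0_lt_compat; nra]. }
  assert (Hexp : exp (- beta * (t - t0)) <= / (1 + beta * (t - t0))).
  { replace (- beta * (t - t0)) with (- (beta * (t - t0))) by ring; apply exp_neg_le_inv; nra. }
  assert (Hsmall : M * exp (- beta * (t - t0)) <= eps / 2).
  { apply Rle_trans with (M * / (1 + beta * (t - t0))); [apply Rmult_le_compat_l; lra|].
    assert (Hpos : 0 < 1 + beta * (t - t0)) by nra.
    apply Rmult_le_reg_r with (1 + beta * (t - t0)); auto.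
    rewrite Rmult_assoc, Rinv_l by lra.
    apply Rmult_le_compat_l with (r := beta * eps) in Hs; [|nra].
    replace (beta * eps * (2 * M / (beta * eps))) with (2 * M) in Hs by (field; lra); nra. }
  specialize (Hbarrier t ltac:(lra)); unfold c in Hbarrier; lra.
Qed.

Lemma upd_id x j : upd x j (x j) = x.
Proof.
  apply functional_extensionality; intros k; unfold upd.
  destruct (Nat.eqb_spec k j); subst; reflexivity.
Qed.

Lemma upd_upd x j a b : upd (upd x j a) j b = upd x j b.
Proof.
  apply functional_extensionality; intros k; unfold upd.
  destruct (Nat.eqb_spec k j); reflexivity.
Qed.

Lemma upd_eq x j t : upd x j t j = t.
Proof. unfold upd; rewrite Nat.eqb_refl; reflexivity. Qed.

Lemma upd_neq x j t k : k <> j -> upd x j t k = x k.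
Proof. intros Hkj; unfold upd; destruct (Nat.eqb_spec k j); [lia|reflexivity]. Qed.

Lemma contN_ext N F x y : contN N F -> (forall k, (k < N)%nat -> x k = y k) -> F x = F y.
Proof.
  intros Hc Hxy; apply NNPP; intros Hne.
  assert (He : Rabs (F x - F y) > 0) by (apply Rabs_pos_lt; lra).
  destruct (Hc y _ He) as [d [Hd Hq]].
  assert (Rabs (F x - F y) < Rabs (F x - F y)); [|lra].
  apply Hq; intros k Hk; rewrite Hxy, Rminus_diag, Rabs_R0 by auto; lra.
Qed.

Lemma upd_not_depends_on F j x t : ~ depends_on F j -> F (upd x j t) = F x.
Proof. intros H; apply NNPP; intros C; apply H; exists x, t; exact C. Qed.

Section Monotone.
Variables (N : nat) (E : nat -> nat -> Prop) (i : nat) (F : vec -> R).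
Hypothesis Hdep : forall j, depends_on F j <-> ((j < N)%nat /\ E i j).
Hypothesis Hinc : strictly_increasing_args N E i F.

Lemma upd_mono j x a b : a <= b -> F (upd x j a) <= F (upd x j b).
Proof.
  intros Hab; destruct (classic ((j < N)%nat /\ E i j)) as [[Hj Ej]|Hn].
  - destruct (Rle_lt_or_eq_dec a b Hab) as [Hlt| ->]; [left; apply Hinc|]; auto; lra.
  - assert (~ depends_on F j) by (rewrite Hdep; exact Hn).
    rewrite !upd_not_depends_on by auto; lra.
Qed.

Lemma mono_prefix n x y : (forall k, (k < n)%nat -> x k <= y k) ->
  (forall k, (k >= n)%nat -> x k = y k) -> F x <= F y.
Proof.
  revert x; induction n as [|n IH]; intros x Hle Heq.
  - replace y with x; [lra|]; apply functional_extensionality; intros k; apply Heq; lia.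
  - apply Rle_trans with (F (upd x n (y n))).
    + rewrite <- (upd_id x n) at 1; apply upd_mono, Hle; lia.
    + apply IH.
      * intros k Hk; rewrite upd_neq by lia; apply Hle; lia.
      * intros k Hk; destruct (Nat.eq_dec k n) as [->|Hkn]; [apply upd_eq|].
        rewrite upd_neq by exact Hkn; apply Heq; lia.
Qed.

(* Independence of each single coordinate [>= N] does not reach all of them at once;
   continuity in the first [N] coordinates does. *)
Lemma mono_of_contN : contN N F ->
  forall x y, (forall k, (k < N)%nat -> x k <= y k) -> F x <= F y.
Proof.
  intros Hc x y Hle.
  set (z := fun k => if Nat.ltb k N then x k else y k).
  rewrite (contN_ext N F x z Hc).
  - apply (mono_prefix N); intros k Hk; unfold z; destruct (Nat.ltb_spec k N);
      solve [apply Hle; lia | reflexivity | lia].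
  - intros k Hk; unfold z; destruct (Nat.ltb_spec k N); [reflexivity|lia].
Qed.

Lemma deriv_nonneg_of_mono (h : R -> R) x l :
  (forall a b, a <= b -> h a <= h b) -> derivable_pt_lim h x l -> 0 <= l.
Proof.
  intros Hm Hd; apply Rnot_lt_le; intros Hl.
  destruct (Hd (- l) ltac:(lra)) as [[del Hdel] Hq]; simpl in Hq.
  specialize (Hq (del / 2) ltac:(lra) ltac:(rewrite Rabs_pos_eq; lra)).
  assert (0 <= (h (x + del / 2) - h x) / (del / 2)).
  { apply Rmult_le_pos; [specialize (Hm x (x + del / 2)); lra|].
    left; apply Rinv_0_lt_compat; lra. }
  apply Rabs_def2 in Hq; lra.
Qed.

Lemma partial_nonneg j x l : partial_at F j x l -> 0 <= l.
Proof. apply deriv_nonneg_of_mono; intros a b; apply upd_mono. Qed.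

End Monotone.

Definition constv (c : R) : vec := fun _ => c.

Section Admissible.
Variables (N : nat) (E : nat -> nat -> Prop) (F : nat -> vec -> R).
Hypothesis HF : admissible N E F.

Lemma admissible_zero i : (i < N)%nat -> F i zerov = 0.
Proof. intros Hi; apply (HF i Hi). Qed.

Lemma admissible_mono i x y : (i < N)%nat ->
  (forall k, (k < N)%nat -> x k <= y k) -> F i x <= F i y.
Proof.
  intros Hi; destruct (HF i Hi) as [Hdep [_ [[Hc _] [Hinc _]]]].
  apply (mono_of_contN N E i); auto.
Qed.

Lemma admissible_edge_pos i j c : (i < N)%nat -> (j < N)%nat -> E i j -> c > 0 ->
  F i (upd zerov j c) > 0.
Proof.
  intros Hi Hj Eij Hc; destruct (HF i Hi) as [_ [H0 [_ [Hinc _]]]].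
  assert (Hz : upd zerov j 0 = zerov) by apply (upd_id zerov j).
  rewrite <- H0; pattern zerov at 2; rewrite <- Hz; apply Rlt_gt, Hinc; auto.
Qed.

Lemma admissible_partial_nonneg i j l : (i < N)%nat ->
  partial_at (F i) j zerov l -> 0 <= l.
Proof.
  intros Hi; destruct (HF i Hi) as [Hdep [_ [_ [Hinc _]]]].
  apply (partial_nonneg N E i); auto.
Qed.

(** Concavity and [F i 0 = 0] make [F i] decay at most linearly below the origin. *)
Lemma admissible_box_bounds i p x : (i < N)%nat -> 0 <= p <= 1 ->
  (forall k, (k < N)%nat -> - p <= x k <= 2) ->
  - p * - F i (constv (-1)) <= F i x <= F i (constv 2).
Proof.
  intros Hi Hp Hx; destruct (HF i Hi) as [_ [H0 [_ [_ Hconc]]]]; split.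
  - apply Rle_trans with (F i (constv (- p))).
    + specialize (Hconc (constv (-1)) zerov p Hp); rewrite H0 in Hconc.
      replace (fun k => p * constv (-1) k + (1 - p) * zerov k) with (constv (- p)) in Hconc.
      * lra.
      * apply functional_extensionality; intros k; unfold constv, zerov; ring.
    + apply admissible_mono; auto; intros k Hk; apply Hx, Hk.
  - apply admissible_mono; auto; intros k Hk; apply Hx, Hk.
Qed.

End Admissible.

Lemma increment_ge_of_deriv_ge (h dh : R -> R) a b m : a <= b ->
  (forall s, a <= s <= b -> derivable_pt_lim h s (dh s)) ->
  (forall s, a <= s <= b -> m <= dh s) -> m * (b - a) <= h b - h a.
Proof.
  intros Hab Hd Hm; destruct (Rle_lt_or_eq_dec a b Hab) as [Hlt| <-]; [|lra].
  destruct (MVT_cor2 h dh a b Hlt Hd) as [s [Hs Hsab]]; rewrite Hs.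
  apply Rmult_le_compat_r; [lra|apply Hm; lra].
Qed.

Definition prefix (x : vec) (n : nat) : vec := fun k => if Nat.ltb k n then x k else 0.

Lemma prefix_0 x : prefix x 0 = zerov.
Proof. reflexivity. Qed.

Lemma prefix_S x n : prefix x (S n) = upd (prefix x n) n (x n).
Proof.
  apply functional_extensionality; intros k; unfold prefix, upd.
  destruct (Nat.eqb_spec k n) as [->|Hkn].
  - rewrite (proj2 (Nat.ltb_lt n (S n))) by lia; reflexivity.
  - destruct (Nat.ltb_spec k (S n)), (Nat.ltb_spec k n); auto; lia.
Qed.

Lemma prefix_upd_0 x n : prefix x n = upd (prefix x n) n 0.
Proof.
  apply functional_extensionality; intros k; unfold prefix, upd.
  destruct (Nat.eqb_spec k n) as [->|]; [rewrite Nat.ltb_irrefl|]; reflexivity.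
Qed.

Lemma upd_increment_ge F (D : vec -> R) j x s m : 0 <= s ->
  (forall y, partial_at F j y (D y)) ->
  (forall t, 0 <= t <= s -> m <= D (upd x j t)) ->
  m * s <= F (upd x j s) - F (upd x j 0).
Proof.
  intros Hs HD Hm; replace (m * s) with (m * (s - 0)) by ring.
  apply (increment_ge_of_deriv_ge (fun t => F (upd x j t)) (fun t => D (upd x j t))); auto.
  intros t Ht; pose proof (HD (upd x j t)) as H; unfold partial_at in H; rewrite upd_eq in H.
  replace (fun u => F (upd x j u)) with (fun u => F (upd (upd x j t) j u)); [exact H|].
  apply functional_extensionality; intros u; rewrite upd_upd; reflexivity.
Qed.

(** Raise the coordinates of [c w] one at a time; on a small box around the origin
    each partial derivative is within [eta] of its value at the origin. *)
Lemma C1_lower_bound N F (D1 : nat -> vec -> R) (Jv : nat -> R) (w : vec) :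
  contN N F -> (forall j x, (j < N)%nat -> partial_at F j x (D1 j x)) ->
  (forall j, (j < N)%nat -> contN N (D1 j)) ->
  (forall j, (j < N)%nat -> partial_at F j zerov (Jv j)) ->
  (forall j, 0 <= w j) ->
  forall eta, eta > 0 -> exists c0, c0 > 0 /\ forall c, 0 < c <= c0 ->
    F (fun k => c * w k) - F zerov >= c * vsum N (fun j => w j * (Jv j - eta)).
Proof.
  intros Hc HD1 HD1c HJ Hw eta Heta.
  destruct (uniform_positive (fun j => (j < N)%nat)
    (fun j d => forall y, (forall k, (k < N)%nat -> Rabs (y k - zerov k) < d) ->
       Rabs (D1 j y - D1 j zerov) < eta)) as [d [Hd Hnear]].
  { apply finite_pred_lt. }
  { intros j d d' Hd' Hq y Hy; apply Hq; intros k Hk; specialize (Hy k Hk); lra. }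
  { intros j Hj; destruct (HD1c j Hj zerov eta Heta) as [d [Hd Hq]]; exists d; auto. }
  set (W := vsum N w).
  assert (HW : 0 <= W) by (apply vsum_nonneg; auto).
  exists (d / (W + 1)); split; [apply Rdiv_lt_0_compat; lra|]; intros c Hc0.
  assert (Hcw : forall k, (k < N)%nat -> 0 <= c * w k < d).
  { intros k Hk; split; [apply Rmult_le_pos; [lra|auto]|].
    assert (w k <= W) by (apply vsum_ge_term; auto).
    pose proof (Hw k).
    apply Rle_lt_trans with (d / (W + 1) * W); [apply Rmult_le_compat; lra|].
    apply Rmult_lt_reg_r with (W + 1); [lra|].
    replace (d / (W + 1) * W * (W + 1)) with (d * W) by (field; lra); nra. }
  set (p := prefix (fun k => c * w k)).
  assert (Hstep : forall n, (n < N)%nat ->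
    F (p (S n)) - F (p n) >= c * (w n * (Jv n - eta))).
  { intros n Hn; unfold p; rewrite prefix_S; rewrite prefix_upd_0 at 2; apply Rle_ge.
    replace (c * (w n * (Jv n - eta))) with ((Jv n - eta) * (c * w n)) by ring.
    apply (upd_increment_ge F (D1 n)); [specialize (Hcw n Hn); lra|intros y; apply HD1, Hn|].
    intros t Ht.
    replace (Jv n) with (D1 n zerov) by (eapply uniqueness_limite; [apply HD1|apply HJ]; lia).
    assert (Hbox : Rabs (D1 n (upd (prefix (fun k => c * w k) n) n t) - D1 n zerov) < eta).
    { apply Hnear; [exact Hn|]; intros k Hk; unfold zerov; rewrite Rminus_0_r.
      specialize (Hcw k Hk).
      destruct (Nat.eq_dec k n) as [->|Hkn]; [rewrite upd_eq, Rabs_pos_eq; lra|].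
      rewrite upd_neq by exact Hkn; unfold prefix; cbv beta; destruct (Nat.ltb k n).
      - rewrite Rabs_pos_eq; lra.
      - rewrite Rabs_R0; lra. }
    apply Rabs_def2 in Hbox; lra. }
  assert (Hsum : forall n, (n <= N)%nat ->
    F (p n) - F zerov >= c * vsum n (fun j => w j * (Jv j - eta))).
  { induction n as [|n IH]; intros Hn; simpl.
    - unfold p; rewrite prefix_0; lra.
    - specialize (IH ltac:(lia)); specialize (Hstep n ltac:(lia)); lra. }
  rewrite (contN_ext N F (fun k => c * w k) (p N) Hc); [apply Hsum; lia|].
  intros k Hk; unfold p, prefix; destruct (Nat.ltb_spec k N); [reflexivity|lia].
Qed.

Definition modulus (x y : R) : R := sqrt (x * x + y * y).

Lemma modulus_triangle x y u v : modulus (x + u) (y + v) <= modulus x y + modulus u v.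
Proof.
  pose proof (triangle (x + u) (y + v) 0 0 u v) as H.
  unfold dist_euc, Rsqr in H; unfold modulus.
  replace (x + u - 0) with (x + u) in H by ring; replace (y + v - 0) with (y + v) in H by ring.
  replace (x + u - u) with x in H by ring; replace (y + v - v) with y in H by ring.
  replace (u - 0) with u in H by ring; replace (v - 0) with v in H by ring; exact H.
Qed.

Lemma modulus_scal c x y : 0 <= c -> modulus (c * x) (c * y) = c * modulus x y.
Proof.
  intros Hc; unfold modulus.
  replace (c * x * (c * x) + c * y * (c * y)) with ((c * c) * (x * x + y * y)) by ring.
  rewrite sqrt_mult, sqrt_square by nra; reflexivity.
Qed.

Lemma modulus_vsum_le n (c x y : nat -> R) : (forall j, (j < n)%nat -> 0 <= c j) ->
  modulus (vsum n (fun j => c j * x j)) (vsum n (fun j => c j * y j))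
  <= vsum n (fun j => c j * modulus (x j) (y j)).
Proof.
  induction n as [|n IH]; intros Hc; simpl.
  - unfold modulus; rewrite Rmult_0_l, Rplus_0_l, sqrt_0; lra.
  - eapply Rle_trans; [apply modulus_triangle|].
    rewrite modulus_scal by (apply Hc; lia).
    specialize (IH (fun j Hj => Hc j ltac:(lia))); lra.
Qed.

(** [w] is the vector of moduli of a complex eigenvector; adding a multiple of the identity makes
    [A] nonnegative, and the triangle inequality then gives [A w >= a w]. *)
Lemma metzler_subsolution N (A : nat -> nat -> R) :
  (forall i j, (i < N)%nat -> (j < N)%nat -> i <> j -> 0 <= A i j) ->
  spectral_abscissa_pos N A ->
  exists a (w : vec), a > 0 /\ (forall j, 0 <= w j) /\ (exists k, (k < N)%nat /\ w k > 0) /\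
    forall i, (i < N)%nat -> vsum N (fun j => A i j * w j) >= a * w i.
Proof.
  intros Hoff [a [b [x [y [Ha [[k [Hk Hnz]] Heig]]]]]].
  set (w := fun j => modulus (x j) (y j)).
  exists a, w; split; [exact Ha|]; split; [intros; apply sqrt_pos|]; split.
  { exists k; split; [exact Hk|]; apply sqrt_lt_R0; destruct Hnz; nra. }
  intros i Hi.
  set (beta := vsum N (fun m => Rabs (A m m))).
  assert (Hbeta : Rabs (A i i) <= beta).
  { apply (vsum_ge_term N (fun m => Rabs (A m m))); auto; intros; apply Rabs_pos. }
  set (B := fun j => A i j + (if Nat.eqb i j then beta else 0)).
  assert (HB : forall j, (j < N)%nat -> 0 <= B j).
  { intros j Hj; unfold B; destruct (Nat.eqb_spec i j) as [<-|Hne].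
    - pose proof (Rle_abs (- A i i)); rewrite Rabs_Ropp in *; lra.
    - rewrite Rplus_0_r; apply Hoff; auto. }
  assert (HBz : forall z : vec,
    vsum N (fun j => B j * z j) = vsum N (fun j => A i j * z j) + beta * z i).
  { intros z; rewrite <- (vsum_delta N i (beta * z i) Hi), <- vsum_plus.
    apply vsum_ext; intros j Hj; unfold B; destruct (Nat.eqb_spec i j) as [<-|]; ring. }
  pose proof (modulus_vsum_le N B x y HB) as Hm.
  destruct (Heig i Hi) as [Ex Ey]; rewrite !HBz, Ex, Ey in Hm.
  assert (0 <= beta) by (pose proof (Rabs_pos (A i i)); lra).
  assert (Hlow : (a + beta) * w i <=
    modulus (a * x i - b * y i + beta * x i) (b * x i + a * y i + beta * y i)).
  { unfold w, modulus; rewrite <- (sqrt_square (a + beta)) at 1 by lra.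
    rewrite <- sqrt_mult by nra; apply sqrt_le_1_alt; nra. }
  unfold w in *; lra.
Qed.

Lemma mul_box_lower p A F T Fm : 0 <= p -> - p <= T <= 2 -> - p * A <= F <= Fm ->
  0 <= A -> 0 <= Fm -> T * F >= - p * (Fm + 2 * A).
Proof.
  intros Hp HT HF HA HFm; destruct (Rle_dec 0 F).
  - assert ((T + p) * F >= 0) by (apply Rle_ge, Rmult_le_pos; lra); nra.
  - assert ((2 - T) * (- F) >= 0) by (apply Rle_ge, Rmult_le_pos; lra); nra.
Qed.

Lemma touch_error_small k d c wj W JW JWm a wmin :
  0 <= k <= 1 -> 0 < c <= d -> 0 < wmin <= wj -> wj <= W -> 0 <= JW <= JWm -> a > 0 ->
  d * (W + JWm + W * JWm + 1) <= a * wmin / 4 ->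
  k * (d * W) + (d + c * wj) * JW < a * wj.
Proof.
  intros Hk Hc Hw HwW HJW Ha Hd.
  assert (0 <= d * W) by nra.
  assert (k * (d * W) <= 1 * (d * W)) by (apply Rmult_le_compat_r; lra).
  assert (d * JW <= d * JWm) by (apply Rmult_le_compat_l; lra).
  assert (c * wj * JW <= d * (W * JWm)).
  { replace (d * (W * JWm)) with (d * W * JWm) by ring.
    apply Rmult_le_compat; try nra. }
  assert (a * wmin <= a * wj) by (apply Rmult_le_compat_l; lra).
  nra.
Qed.

Inductive face := face_R | face_T | face_U.

Section SURQT.
Variables (N : nat) (ER ET : nat -> nat -> Prop) (theta delta : nat -> R)
  (f g : nat -> vec -> R) (Rr Tt : R -> vec).
Hypothesis Hpar : forall i, (i < N)%nat -> theta i > 0 /\ delta i > 0.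
Hypothesis Hf : admissible N ER f.
Hypothesis Hg : admissible N ET g.
Hypothesis Hsol : is_solution N f g theta delta Rr Tt.
Hypothesis Hinit : forall i, (i < N)%nat ->
  0 <= Rr 0 i /\ 0 <= Tt 0 i /\ Rr 0 i + Tt 0 i <= 1.

Definition rateR t i := Tt t i * f i (Rr t) - Rr t i * g i (Tt t) - theta i * Rr t i.
Definition rateT t i :=
  Rr t i * g i (Tt t) - Tt t i * f i (Rr t) + delta i * (1 - Rr t i - Tt t i).

Lemma derivable_R i t : (i < N)%nat -> t > 0 -> derivable_pt_lim (fun s => Rr s i) t (rateR t i).
Proof. intros Hi Ht; apply (proj2 Hsol i t Hi Ht). Qed.

Lemma derivable_T i t : (i < N)%nat -> t > 0 -> derivable_pt_lim (fun s => Tt s i) t (rateT t i).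
Proof. intros Hi Ht; apply (proj2 Hsol i t Hi Ht). Qed.

Lemma right_cont_R i t : (i < N)%nat -> 0 <= t -> right_cont (fun s => Rr s i) t.
Proof.
  intros Hi Ht; destruct (Rle_lt_or_eq_dec 0 t Ht) as [Hlt| <-].
  - apply continuity_pt_right_cont, (derivable_pt_lim_continuity_pt _ _ _ (derivable_R i t Hi Hlt)).
  - intros e He; destruct (proj1 Hsol i Hi e He) as [d [Hd Hq]].
    exists d; split; auto; intros s Hs; apply Hq; lra.
Qed.

Lemma right_cont_T i t : (i < N)%nat -> 0 <= t -> right_cont (fun s => Tt s i) t.
Proof.
  intros Hi Ht; destruct (Rle_lt_or_eq_dec 0 t Ht) as [Hlt| <-].
  - apply continuity_pt_right_cont, (derivable_pt_lim_continuity_pt _ _ _ (derivable_T i t Hi Hlt)).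
  - intros e He; destruct (proj1 Hsol i Hi e He) as [d [Hd Hq]].
    exists d; split; auto; intros s Hs; apply Hq; lra.
Qed.

Definition box_const i :=
  2 * (f i (constv 2) - f i (constv (-1)) + g i (constv 2) - g i (constv (-1)))
  + theta i + delta i.

Definition growth := 1 + vsum N box_const.

Lemma box_values_sign i : (i < N)%nat ->
  0 <= f i (constv 2) /\ 0 <= - f i (constv (-1)) /\
  0 <= g i (constv 2) /\ 0 <= - g i (constv (-1)).
Proof.
  intros Hi.
  pose proof (admissible_zero _ _ _ Hf i Hi); pose proof (admissible_zero _ _ _ Hg i Hi).
  assert (H1 : forall k, (k < N)%nat -> zerov k <= constv 2 k) by (intros; unfold zerov, constv; lra).
  assert (H2 : forall k, (k < N)%nat -> constv (-1) k <= zerov k) by (intros; unfold zerov, constv; lra).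
  pose proof (admissible_mono _ _ _ Hf i _ _ Hi H1); pose proof (admissible_mono _ _ _ Hf i _ _ Hi H2).
  pose proof (admissible_mono _ _ _ Hg i _ _ Hi H1); pose proof (admissible_mono _ _ _ Hg i _ _ Hi H2).
  lra.
Qed.

Lemma growth_ge i : (i < N)%nat -> 1 + box_const i <= growth.
Proof.
  intros Hi; unfold growth; apply Rplus_le_compat_l, vsum_ge_term; auto.
  intros j Hj; destruct (box_values_sign j Hj); destruct (Hpar j Hj); unfold box_const; lra.
Qed.

Lemma growth_pos : 0 < growth.
Proof.
  assert (0 <= vsum N box_const); [|unfold growth; lra].
  apply vsum_nonneg; intros j Hj; destruct (box_values_sign j Hj); destruct (Hpar j Hj); unfold box_const; lra.
Qed.

Definition slack eps t := eps * exp (growth * t).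

Lemma slack_derivable eps t : derivable_pt_lim (slack eps) t (growth * slack eps t).
Proof.
  assert (H := derivable_pt_lim_exp_affine eps growth 0 t).
  unfold slack; rewrite Rminus_0_r in H.
  replace (fun s => eps * exp (growth * s)) with (fun s => eps * exp (growth * (s - 0)));
    [exact H|apply functional_extensionality; intros s; rewrite Rminus_0_r; reflexivity].
Qed.

Lemma slack_pos eps t : eps > 0 -> 0 < slack eps t.
Proof. intros Heps; apply Rmult_lt_0_compat; [lra|apply exp_pos]. Qed.

Lemma slack_le eps s t : eps > 0 -> s <= t -> slack eps s <= slack eps t.
Proof.
  intros Heps Hst; apply Rmult_le_compat_l; [lra|].
  destruct (Rle_lt_or_eq_dec s t Hst) as [Hlt| ->]; [|lra].
  left; apply exp_increasing, Rmult_lt_compat_l; [apply growth_pos|lra].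
Qed.

Definition margin eps (x : face * nat) t :=
  match x with
  | (face_R, i) => Rr t i + slack eps t
  | (face_T, i) => Tt t i + slack eps t
  | (face_U, i) => 1 - Rr t i - Tt t i + slack eps t
  end.

Definition margin_rate eps (x : face * nat) t :=
  match x with
  | (face_R, i) => rateR t i + growth * slack eps t
  | (face_T, i) => rateT t i + growth * slack eps t
  | (face_U, i) => - rateR t i - rateT t i + growth * slack eps t
  end.

Lemma margin_derivable eps x t : (snd x < N)%nat -> t > 0 ->
  derivable_pt_lim (margin eps x) t (margin_rate eps x t).
Proof.
  destruct x as [[| |] i]; simpl; intros Hi Ht.
  3: replace (- rateR t i) with (0 - rateR t i) by ring.
  all: apply (derivable_pt_lim_plus _ (slack eps)); auto using derivable_R, derivable_T, slack_derivable.
  apply (derivable_pt_lim_minus (fun s => 1 - Rr s i)); auto using derivable_T.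
  apply (derivable_pt_lim_minus (fct_cte 1)); auto using derivable_R, derivable_pt_lim_const.
Qed.

Lemma margin_right_cont eps x : (snd x < N)%nat -> right_cont (margin eps x) 0.
Proof.
  assert (Hs : right_cont (slack eps) 0).
  { apply continuity_pt_right_cont, (derivable_pt_lim_continuity_pt _ _ _ (slack_derivable eps 0)). }
  destruct x as [[| |] i]; simpl; intros Hi;
    apply right_cont_plus; auto using right_cont_R, right_cont_T, Rle_refl.
  apply right_cont_minus; auto using right_cont_T, Rle_refl.
  apply right_cont_minus; auto using right_cont_R, right_cont_const, Rle_refl.
Qed.

Lemma margin_box eps t : (forall y, (snd y < N)%nat -> margin eps y t >= 0) ->
  forall j, (j < N)%nat -> - slack eps t <= Rr t j /\ - slack eps t <= Tt t j /\ Rr t j + Tt t j <= 1 + slack eps t.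
Proof.
  intros Hnn j Hj; pose proof (Hnn (face_R, j) Hj); pose proof (Hnn (face_T, j) Hj);
    pose proof (Hnn (face_U, j) Hj); simpl in *; lra.
Qed.

Lemma margin_touch eps t x : eps > 0 -> slack eps t <= 1 / 2 ->
  (forall y, (snd y < N)%nat -> margin eps y t >= 0) ->
  (snd x < N)%nat -> margin eps x t = 0 -> margin_rate eps x t > 0.
Proof.
  intros Heps Hsmall Hnn Hx Hz.
  pose proof (margin_box eps t Hnn) as Hbox.
  pose proof (slack_pos eps t Heps) as Hp; set (p := slack eps t) in *.
  destruct x as [fc i]; simpl in Hx.
  destruct (Hbox i Hx) as [HRi [HTi HUi]].
  assert (HL : growth * p >= (1 + box_const i) * p)
    by (apply Rle_ge, Rmult_le_compat_r; [lra|apply growth_ge, Hx]).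
  destruct (box_values_sign i Hx) as [HF [HA [HG HB]]].
  destruct (Hpar i Hx) as [Hth Hde]; unfold box_const in *.
  assert (Hfb := admissible_box_bounds _ _ _ Hf i p (Rr t) Hx ltac:(lra)
    ltac:(intros k Hk; specialize (Hbox k Hk); lra)).
  assert (Hgb := admissible_box_bounds _ _ _ Hg i p (Tt t) Hx ltac:(lra)
    ltac:(intros k Hk; specialize (Hbox k Hk); lra)).
  assert (0 <= p * f i (constv 2) /\ 0 <= p * - f i (constv (-1)) /\
          0 <= p * g i (constv 2) /\ 0 <= p * - g i (constv (-1)) /\
          0 < p * theta i /\ 0 < p * delta i) by (repeat split; nra).
  unfold margin, margin_rate, rateR, rateT in *; fold p in Hz |- *.
  destruct fc.
  - assert (Hprod := mul_box_lower p _ _ (Tt t i) _ ltac:(lra) ltac:(lra) Hfb HA HF).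
    assert (p * g i (Tt t) >= - p * - g i (constv (-1))).
    { assert (p * (g i (Tt t) + p * - g i (constv (-1))) >= 0) by (apply Rle_ge, Rmult_le_pos; lra).
      assert (p * - g i (constv (-1)) * (1 - p) >= 0) by (apply Rle_ge, Rmult_le_pos; nra).
      nra. }
    replace (Rr t i) with (- p) by lra; lra.
  - assert (Hprod := mul_box_lower p _ _ (Rr t i) _ ltac:(lra) ltac:(lra) Hgb HB HG).
    assert (p * f i (Rr t) >= - p * - f i (constv (-1))).
    { assert (p * (f i (Rr t) + p * - f i (constv (-1))) >= 0) by (apply Rle_ge, Rmult_le_pos; lra).
      assert (p * - f i (constv (-1)) * (1 - p) >= 0) by (apply Rle_ge, Rmult_le_pos; nra).
      nra. }
    assert (delta i * (1 + p - Rr t i - Tt t i) >= 0) by (apply Rle_ge, Rmult_le_pos; lra).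
    replace (Tt t i) with (- p) in * by lra; lra.
  - assert (theta i * (Rr t i + p) >= 0) by (apply Rle_ge, Rmult_le_pos; lra).
    replace (Tt t i) with (1 + p - Rr t i) by lra; lra.
Qed.

Lemma margin_positive eps tau : eps > 0 -> slack eps tau <= 1 / 2 ->
  forall t, 0 <= t <= tau -> forall x, (snd x < N)%nat -> margin eps x t > 0.
Proof.
  intros Heps Hsmall.
  apply (barrier _ (fun x => (snd x < N)%nat) (margin eps) (margin_rate eps) 0 tau).
  - exists (list_prod (face_R :: face_T :: face_U :: nil) (seq 0 N)).
    intros [fc i] Hi; apply in_prod_iff; split; [destruct fc; simpl; tauto|].
    apply in_seq; simpl in Hi; lia.
  - intros [[| |] i] Hi; simpl in *; destruct (Hinit i Hi);
      pose proof (slack_pos eps 0 Heps); lra.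
  - intros x Hx; apply margin_right_cont, Hx.
  - intros x t Hx Ht; apply margin_derivable; auto; lra.
  - intros t Ht Hnn x Hx Hz; apply (margin_touch eps t x); auto.
    pose proof (slack_le eps t tau Heps ltac:(lra)); lra.
Qed.

Lemma solution_in_omega t i : 0 <= t -> (i < N)%nat ->
  0 <= Rr t i /\ 0 <= Tt t i /\ Rr t i + Tt t i <= 1.
Proof.
  intros Ht Hi.
  assert (Hslack : forall q, q > 0 ->
    Rr t i + q > 0 /\ Tt t i + q > 0 /\ 1 - Rr t i - Tt t i + q > 0).
  { intros q Hq.
    set (eps := Rmin (1 / 2) (q / 2) / exp (growth * t)).
    assert (Hsl : slack eps t = Rmin (1 / 2) (q / 2)).
    { unfold slack, eps; field; apply Rgt_not_eq, exp_pos. }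
    assert (Heps : eps > 0) by (apply Rdiv_lt_0_compat; [apply Rmin_glb_lt|apply exp_pos]; lra).
    assert (Hmar := margin_positive eps t Heps ltac:(rewrite Hsl; apply Rmin_l) t ltac:(lra)).
    pose proof (Rmin_r (1 / 2) (q / 2)).
    pose proof (Hmar (face_R, i) Hi) as H1; pose proof (Hmar (face_T, i) Hi) as H2.
    pose proof (Hmar (face_U, i) Hi) as H3; simpl in H1, H2, H3; lra. }
  split; [|split]; apply Rnot_lt_le; intros C.
  - destruct (Hslack (- Rr t i / 2)) as [H _]; lra.
  - destruct (Hslack (- Tt t i / 2)) as [_ [H _]]; lra.
  - destruct (Hslack ((Rr t i + Tt t i - 1) / 2)) as [_ [_ H]]; lra.
Qed.

Lemma f_solution_nonneg i t : (i < N)%nat -> 0 <= t -> 0 <= f i (Rr t).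
Proof.
  intros Hi Ht; rewrite <- (admissible_zero _ _ _ Hf i Hi).
  apply (admissible_mono _ _ _ Hf); auto; intros k Hk; apply (solution_in_omega t k Ht Hk).
Qed.

Lemma g_solution_le i t : (i < N)%nat -> 0 <= t -> g i (Tt t) <= g i onev.
Proof.
  intros Hi Ht; apply (admissible_mono _ _ _ Hg); auto; intros k Hk.
  pose proof (solution_in_omega t k Ht Hk); unfold onev; lra.
Qed.

Lemma g_one_nonneg i : (i < N)%nat -> 0 <= g i onev.
Proof.
  intros Hi; rewrite <- (admissible_zero _ _ _ Hg i Hi).
  apply (admissible_mono _ _ _ Hg); auto; intros k Hk; unfold zerov, onev; lra.
Qed.

Lemma rateR_lower i t : (i < N)%nat -> 0 <= t ->
  rateR t i >= Tt t i * f i (Rr t) - (g i onev + theta i) * Rr t i.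
Proof.
  intros Hi Ht; unfold rateR.
  pose proof (solution_in_omega t i Ht Hi); pose proof (g_solution_le i t Hi Ht).
  assert (Rr t i * g i (Tt t) <= Rr t i * g i onev) by (apply Rmult_le_compat_l; lra).
  lra.
Qed.

Hypothesis Hpos : forall i, (i < N)%nat -> Rr 0 i > 0.

Lemma R_positive i t : (i < N)%nat -> t >= 0 -> Rr t i > 0.
Proof.
  intros Hi; apply (positive_of_rate_lower (fun s => Rr s i) (fun s => rateR s i) 0 (g i onev + theta i)).
  - pose proof (g_one_nonneg i Hi); destruct (Hpar i Hi); lra.
  - apply Hpos, Hi.
  - apply right_cont_R; auto; lra.
  - intros s Hs; apply derivable_R; auto.
  - intros s Hs _; pose proof (rateR_lower i s Hi ltac:(lra)).
    pose proof (solution_in_omega s i ltac:(lra) Hi); pose proof (f_solution_nonneg i s Hi ltac:(lra)).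
    assert (0 <= Tt s i * f i (Rr s)) by (apply Rmult_le_pos; lra); lra.
Qed.

Definition kappa i := delta i / (theta i + delta i).

Lemma kappa_bounds i : (i < N)%nat -> 0 < kappa i < 1.
Proof.
  intros Hi; destruct (Hpar i Hi); unfold kappa; split.
  - apply Rdiv_lt_0_compat; lra.
  - apply Rmult_lt_reg_r with (theta i + delta i); [lra|].
    unfold Rdiv; rewrite Rmult_assoc, Rinv_l; lra.
Qed.

(** [R + T] obeys [(R + T)' >= delta - (theta + delta) (R + T)] since [theta R <= theta (R + T)]. *)
Lemma eventually_RT_above i eps : (i < N)%nat -> eps > 0 ->
  exists T0, forall t, t >= T0 -> Rr t i + Tt t i > kappa i - eps.
Proof.
  intros Hi Heps; destruct (Hpar i Hi) as [Hth Hde].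
  apply (eventually_above_of_rate_lower (fun s => Rr s i + Tt s i)
    (fun s => rateR s i + rateT s i) 0 (delta i) (theta i + delta i)); auto; [lra| | |].
  - apply right_cont_plus; [apply right_cont_R|apply right_cont_T]; auto; lra.
  - intros s Hs; apply (derivable_pt_lim_plus (fun s => Rr s i)); [apply derivable_R|apply derivable_T]; auto.
  - intros s Hs _; pose proof (solution_in_omega s i ltac:(lra) Hi).
    assert (theta i * Rr s i <= theta i * (Rr s i + Tt s i)) by (apply Rmult_le_compat_l; lra).
    unfold rateR, rateT; nra.
Qed.

Definition persistent i := exists c T0, c > 0 /\ forall t, t >= T0 -> Rr t i >= c.

(** Once [R_b] stays above [c_b], [f_a(R) >= f_a(c_b e_b) > 0] and eventually
    [T_a >= kappa_a / 2 - R_a], so [R_a] obeys a linear inequality forcing it above a positive level. *)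
Lemma persistent_edge a b : (a < N)%nat -> (b < N)%nat -> ER a b -> persistent b -> persistent a.
Proof.
  intros Ha Hb Eab [cb [T0 [Hcb HT0]]].
  set (phi := f a (upd zerov b cb)).
  assert (Hphi : phi > 0) by (apply (admissible_edge_pos _ _ _ Hf); auto).
  set (K := g a onev + theta a).
  assert (HK : K > 0) by (pose proof (g_one_nonneg a Ha); destruct (Hpar a Ha); unfold K; lra).
  set (k := kappa a); pose proof (kappa_bounds a Ha) as Hk; fold k in Hk.
  destruct (eventually_RT_above a (k / 2) Ha ltac:(lra)) as [T1 HT1]; fold k in HT1.
  set (t0 := Rmax (Rmax T0 T1) 0).
  assert (Ht0 : T0 <= t0 /\ T1 <= t0 /\ 0 <= t0).
  { unfold t0; pose proof (Rmax_l (Rmax T0 T1) 0); pose proof (Rmax_r (Rmax T0 T1) 0).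
    pose proof (Rmax_l T0 T1); pose proof (Rmax_r T0 T1); lra. }
  set (alpha := k * phi / 2); set (beta := phi + K).
  assert (Hab : 0 < alpha / beta <= k / 2).
  { unfold alpha, beta; split; [apply Rdiv_lt_0_compat; nra|].
    apply Rmult_le_reg_r with (phi + K); [lra|].
    unfold Rdiv; rewrite Rmult_assoc, Rinv_l by lra; nra. }
  assert (Hrate : forall s, s > t0 -> Rr s a < alpha / beta -> rateR s a >= alpha - beta * Rr s a).
  { intros s Hs Hlow.
    pose proof (solution_in_omega s a ltac:(lra) Ha) as [HR [HT _]].
    specialize (HT1 s ltac:(lra)).
    assert (Hfa : f a (Rr s) >= phi).
    { apply Rle_ge, (admissible_mono _ _ _ Hf); auto; intros m Hm; unfold upd, zerov.
      destruct (Nat.eqb_spec m b) as [->|]; [apply Rge_le, HT0; lra|].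
      apply (solution_in_omega s m ltac:(lra) Hm). }
    assert (Tt s a * f a (Rr s) >= (k / 2 - Rr s a) * phi).
    { apply Rle_ge, Rle_trans with (Tt s a * phi);
        [apply Rmult_le_compat_r|apply Rmult_le_compat_l]; lra. }
    pose proof (rateR_lower a s Ha ltac:(lra)) as Hlower; fold K in Hlower.
    unfold alpha, beta; lra. }
  destruct (eventually_above_of_rate_lower (fun s => Rr s a) (fun s => rateR s a) t0 alpha beta
    ltac:(unfold beta; lra) (right_cont_R a t0 Ha ltac:(lra))
    ltac:(intros s Hs; apply derivable_R; auto; lra) Hrate (alpha / beta / 2) ltac:(lra))
    as [T2 HT2].
  exists (alpha / beta / 2), T2; split; [lra|]; intros t Ht; specialize (HT2 t Ht); lra.
Qed.

Variable J : nat -> nat -> R.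
Hypothesis HJ : forall i j, (i < N)%nat -> (j < N)%nat -> partial_at (f i) j zerov (J i j).

Definition Jmul (w : vec) i := vsum N (fun k => J i k * w k).

Lemma J_nonneg i j : (i < N)%nat -> (j < N)%nat -> 0 <= J i j.
Proof. intros Hi Hj; apply (admissible_partial_nonneg _ _ _ Hf i j); auto. Qed.

Lemma Q2_row i (w : vec) : (i < N)%nat ->
  vsum N (fun j => Q2 N J theta delta g i j * w j) =
  kappa i * Jmul w i - (theta i + g i onev) * w i.
Proof.
  intros Hi; destruct (Hpar i Hi); unfold Jmul.
  rewrite <- vsum_scal, <- (vsum_delta N i ((theta i + g i onev) * w i) Hi).
  rewrite <- vsum_minus.
  apply vsum_ext; intros j Hj; unfold Q2, kappa.
  destruct (Nat.eqb_spec i j) as [<-|]; field; lra.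
Qed.

Lemma Q2_metzler i j : (i < N)%nat -> (j < N)%nat -> i <> j -> 0 <= Q2 N J theta delta g i j.
Proof.
  intros Hi Hj Hij; unfold Q2; destruct (Nat.eqb_spec i j) as [|_]; [lia|].
  pose proof (J_nonneg i j Hi Hj); pose proof (kappa_bounds i Hi); destruct (Hpar i Hi).
  replace (J i j - 0 - theta i / (theta i + delta i) * J i j - 0) with (kappa i * J i j)
    by (unfold kappa; field; lra).
  apply Rmult_le_pos; lra.
Qed.

Lemma Jmul_nonneg w i : (forall k, 0 <= w k) -> (i < N)%nat -> 0 <= Jmul w i.
Proof. intros Hw Hi; apply vsum_nonneg; intros k Hk; apply Rmult_le_pos; auto using J_nonneg. Qed.

Lemma f_lower_bound_uniform (w : vec) d : (forall j, 0 <= w j) -> d > 0 ->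
  exists c0, c0 > 0 /\ forall i, (i < N)%nat -> forall c, 0 < c <= c0 ->
    f i (fun k => c * w k) >= c * (Jmul w i - d * vsum N w).
Proof.
  intros Hw Hd.
  apply (uniform_positive (fun i => (i < N)%nat)); [apply finite_pred_lt| |].
  - intros i c0 c0' Hc0' Hq c Hc; apply Hq; lra.
  - intros i Hi; destruct (Hf i Hi) as [_ [Hf0 [[Hcont [D1 [_ [HD1 [HD1c _]]]]] _]]].
    destruct (C1_lower_bound N (f i) D1 (J i) w Hcont HD1 HD1c (fun j Hj => HJ i j Hi Hj) Hw d Hd)
      as [c0 [Hc0 Hq]].
    exists c0; split; auto; intros c Hc; specialize (Hq c Hc); rewrite Hf0 in Hq.
    replace (Jmul w i - d * vsum N w) with (vsum N (fun j => w j * (J i j - d))); [lra|].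
    unfold Jmul; rewrite <- vsum_scal, <- vsum_minus; apply vsum_ext; intros; ring.
Qed.

Lemma rateR_touch_lower j t c eps eta (w : vec) : (j < N)%nat -> 0 <= t -> 0 < c ->
  0 <= eps -> 0 <= eta -> (forall k, 0 <= w k) ->
  (forall k, (k < N)%nat -> c * w k <= Rr t k) -> Rr t j = c * w j ->
  Rr t j + Tt t j > kappa j - eps -> 0 <= kappa j - eps - c * w j ->
  f j (fun k => c * w k) >= c * (Jmul w j - eta * vsum N w) ->
  rateR t j >= c * (kappa j * Jmul w j - (theta j + g j onev) * w j
    - (kappa j * (eta * vsum N w) + (eps + c * w j) * Jmul w j)).
Proof.
  intros Hj Ht Hc Heps Heta Hw Hge HRj HU Hco Htaylor.
  pose proof (Jmul_nonneg w j Hw Hj) as HJW.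
  set (JW := Jmul w j) in *; set (W := vsum N w) in *.
  assert (HW : 0 <= W) by (apply vsum_nonneg; auto).
  assert (Hfj : f j (Rr t) >= f j (fun k => c * w k)) by (apply Rle_ge, (admissible_mono _ _ _ Hf); auto).
  pose proof (f_solution_nonneg j t Hj Ht); pose proof (rateR_lower j t Hj Ht) as Hrate.
  set (co := kappa j - eps - c * w j) in *.
  assert (Tt t j * f j (Rr t) >= co * (c * (JW - eta * W))).
  { apply Rle_ge, Rle_trans with (co * f j (Rr t)); [apply Rmult_le_compat_l; lra|].
    apply Rmult_le_compat_r; unfold co; lra. }
  assert (0 <= (eps + c * w j) * (c * (eta * W))).
  { apply Rmult_le_pos; [|apply Rmult_le_pos; [lra|apply Rmult_le_pos; lra]].
    assert (0 <= c * w j) by (apply Rmult_le_pos; auto; lra); lra. }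
  rewrite HRj in Hrate; unfold co in *; nra.
Qed.

Lemma support_barrier a (w : vec) d c Ts : a > 0 -> (forall j, 0 <= w j) ->
  (forall i, (i < N)%nat -> vsum N (fun j => Q2 N J theta delta g i j * w j) >= a * w i) ->
  0 < c <= d -> 0 <= Ts ->
  (forall j, (j < N)%nat -> w j > 0 ->
     d * (vsum N w + vsum N (Jmul w) + vsum N w * vsum N (Jmul w) + 1) <= a * w j / 4) ->
  (forall j, (j < N)%nat -> 2 * d * (vsum N w + 1) <= kappa j) ->
  (forall j, (j < N)%nat -> f j (fun k => c * w k) >= c * (Jmul w j - d * vsum N w)) ->
  (forall j t, (j < N)%nat -> t >= Ts -> Rr t j + Tt t j > kappa j - d) ->
  (forall j, (j < N)%nat -> c * w j < Rr Ts j) ->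
  forall t, t >= Ts -> forall i, (i < N)%nat -> Rr t i > c * w i.
Proof.
  intros Ha Hw Hsub Hc HTs Hsmall Hkappa Htaylor HU Hstart t Ht i Hi.
  set (W := vsum N w) in *; set (JWm := vsum N (Jmul w)) in *.
  assert (HW : 0 <= W) by (apply vsum_nonneg; auto).
  enough (Rr t i - c * w i > 0) by lra.
  apply (barrier nat (fun i => (i < N)%nat) (fun i s => Rr s i - c * w i) (fun i s => rateR s i) Ts t);
    auto using finite_pred_lt; [| | | |lra].
  - intros j Hj; specialize (Hstart j Hj); lra.
  - intros j Hj; apply right_cont_minus; [apply right_cont_R|apply right_cont_const]; auto.
  - intros j s Hj Hs; replace (rateR s j) with (rateR s j - 0) by ring.
    apply (derivable_pt_lim_minus (fun s => Rr s j) (fct_cte (c * w j)));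
      [apply derivable_R; auto; lra|apply derivable_pt_lim_const].
  - intros t1 Ht1 Hnn j Hj Hz.
    destruct (Rle_lt_or_eq_dec 0 (w j) (Hw j)) as [Hwj|Hwj].
    2: { pose proof (R_positive j t1 Hj ltac:(lra)); rewrite <- Hwj in Hz; lra. }
    assert (HwW : w j <= W) by (apply vsum_ge_term; auto).
    assert (HJW : 0 <= Jmul w j <= JWm) by (split; [|apply vsum_ge_term]; auto using Jmul_nonneg).
    pose proof (kappa_bounds j Hj); specialize (Hkappa j Hj).
    assert (c * w j <= c * W) by (apply Rmult_le_compat_l; lra).
    assert (c * W <= d * W) by (apply Rmult_le_compat_r; lra).
    assert (Hrate := rateR_touch_lower j t1 c d d w Hj ltac:(lra) ltac:(lra) ltac:(lra) ltac:(lra)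
      Hw ltac:(intros k Hk; specialize (Hnn k Hk); lra) ltac:(lra) (HU j t1 Hj ltac:(lra))
      ltac:(lra) (Htaylor j Hj)); fold W in Hrate.
    assert (Hrow := Hsub j Hj); rewrite Q2_row in Hrow by exact Hj.
    assert (Herr := touch_error_small (kappa j) d c (w j) W (Jmul w j) JWm a (w j) ltac:(lra)
      ltac:(lra) ltac:(lra) HwW HJW Ha (Hsmall j Hj Hwj)).
    set (E := kappa j * (d * W) + (d + c * w j) * Jmul w j) in *.
    assert (c * (a * w j - E) <= c * (kappa j * Jmul w j - (theta j + g j onev) * w j - E))
      by (apply Rmult_le_compat_l; lra).
    assert (0 < c * (a * w j - E)) by (apply Rmult_lt_0_compat; lra).
    lra.
Qed.

Lemma support_persistence a (w : vec) : a > 0 -> (forall j, 0 <= w j) ->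
  (forall i, (i < N)%nat -> vsum N (fun j => Q2 N J theta delta g i j * w j) >= a * w i) ->
  exists c Ts, c > 0 /\ forall t, t >= Ts -> forall i, (i < N)%nat -> Rr t i > c * w i.
Proof.
  intros Ha Hw Hsub.
  set (W := vsum N w); set (JWm := vsum N (Jmul w)).
  assert (HW : 0 <= W) by (apply vsum_nonneg; auto).
  assert (HJWm : 0 <= JWm) by (apply vsum_nonneg; intros i Hi; apply Jmul_nonneg; auto).
  destruct (uniform_lower_bound (fun i => (i < N)%nat /\ w i > 0) w) as [wmin [Hwmin Hwle]].
  { destruct (finite_pred_lt N) as [l Hl]; exists l; intros i [Hi _]; auto. }
  { intros i [_ Hi]; exact Hi. }
  destruct (uniform_lower_bound (fun i => (i < N)%nat) kappa) as [kmin [Hkmin Hkle]].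
  { apply finite_pred_lt. }
  { intros i Hi; apply kappa_bounds, Hi. }
  destruct (exists_small_scale ((W + JWm + W * JWm + 1, a * wmin / 4) :: (2 * (W + 1), kmin) :: nil))
    as [d [Hd Hdl]].
  { intros kb [<-|[<-|[]]]; simpl; split; nra. }
  pose proof (Hdl _ (or_introl eq_refl)) as Hd1; pose proof (Hdl _ (or_intror (or_introl eq_refl))) as Hd2.
  simpl in Hd1, Hd2.
  destruct (f_lower_bound_uniform w d Hw Hd) as [c0 [Hc0 Htaylor]].
  destruct (uniform_eventually (fun i => (i < N)%nat) (fun i t => Rr t i + Tt t i > kappa i - d))
    as [T1 HT1].
  { apply finite_pred_lt. }
  { intros i Hi; apply eventually_RT_above; auto. }
  set (Ts := Rmax T1 0).
  assert (HTs : T1 <= Ts /\ 0 <= Ts) by (split; [apply Rmax_l|apply Rmax_r]).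
  destruct (uniform_lower_bound (fun i => (i < N)%nat) (fun i => Rr Ts i)) as [m [Hm Hmle]].
  { apply finite_pred_lt. }
  { intros i Hi; apply R_positive; auto; lra. }
  destruct (exists_small_scale ((1, d) :: (1, c0) :: (W + 1, m) :: nil)) as [c [Hc Hcl]].
  { intros kb [<-|[<-|[<-|[]]]]; simpl; split; lra. }
  pose proof (Hcl _ (or_introl eq_refl)) as Hc1; pose proof (Hcl _ (or_intror (or_introl eq_refl))) as Hc2.
  pose proof (Hcl _ (or_intror (or_intror (or_introl eq_refl)))) as Hc3; simpl in Hc1, Hc2, Hc3.
  exists c, Ts; split; [lra|].
  apply (support_barrier a w d c Ts Ha Hw Hsub ltac:(lra) ltac:(lra)).
  - intros j Hj Hwj; specialize (Hwle j (conj Hj Hwj)).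
    assert (a * wmin <= a * w j) by (apply Rmult_le_compat_l; lra); fold W JWm; lra.
  - intros j Hj; specialize (Hkle j Hj); fold W; lra.
  - intros j Hj; apply Htaylor; auto; lra.
  - intros j s Hj Hs; apply HT1; auto; lra.
  - intros j Hj; specialize (Hmle j Hj).
    assert (c * w j <= c * W) by (apply Rmult_le_compat_l; [lra|apply vsum_ge_term; auto]).
    fold W; nra.
Qed.

Lemma persistent_path x y :
  clos_refl_trans nat (fun a b => (a < N)%nat /\ (b < N)%nat /\ ER a b) x y ->
  persistent y -> persistent x.
Proof.
  induction 1 as [a b [Ha [Hb Eab]]| |x y z _ IHxy _ IHyz]; intros Hp.
  - exact (persistent_edge a b Ha Hb Eab Hp).
  - exact Hp.
  - exact (IHxy (IHyz Hp)).
Qed.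

Lemma uniformly_persistent : strongly_connected N ER ->
  spectral_abscissa_pos N (Q2 N J theta delta g) ->
  exists c, c > 0 /\ forall i, (i < N)%nat -> exists T0, forall t, t >= T0 -> Rr t i >= c.
Proof.
  intros Hsc Hspec.
  destruct (metzler_subsolution N _ Q2_metzler Hspec) as [a [w [Ha [Hw [[k [Hk Hwk]] Hsub]]]]].
  destruct (support_persistence a w Ha Hw Hsub) as [c [Ts [Hc HR]]].
  assert (Hpk : persistent k).
  { exists (c * w k), Ts; split; [nra|]; intros t Ht; left; apply HR; auto. }
  apply (uniform_positive (fun i => (i < N)%nat)); [apply finite_pred_lt| |].
  - intros i d d' Hd' [T0 HT0]; exists T0; intros t Ht; specialize (HT0 t Ht); lra.
  - intros i Hi; destruct (persistent_path i k (Hsc i k Hi Hk) Hpk) as [ci [T0 [Hci HT0]]].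
    exists ci; split; [exact Hci|exists T0; exact HT0].
Qed.

End SURQT.

Theorem theorem4 (N : nat) (ER ET : nat -> nat -> Prop)
  (theta delta : nat -> R) (f g : nat -> vec -> R) (J : nat -> nat -> R)
  (Rr Tt : R -> vec) :
  strongly_connected N ER -> strongly_connected N ET ->
  (forall i, (i < N)%nat -> theta i > 0 /\ delta i > 0) ->
  admissible N ER f -> admissible N ET g ->
  (forall i j, (i < N)%nat -> (j < N)%nat -> partial_at (f i) j zerov (J i j)) ->
  spectral_abscissa_pos N (Q2 N J theta delta g) ->
  is_solution N f g theta delta Rr Tt ->
  (forall i, (i < N)%nat ->
     0 <= Rr 0 i /\ 0 <= Tt 0 i /\ Rr 0 i + Tt 0 i <= 1) ->
  (forall i, (i < N)%nat -> Rr 0 i > 0) ->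
  exists c, c > 0 /\
    forall i, (i < N)%nat ->
      forall eps, eps > 0 -> exists t0, forall t, t >= t0 -> Rr t i >= c - eps.
Proof.
  intros HscR _ Hpar Hf Hg HJ Hspec Hsol Hinit Hpos.
  destruct (uniformly_persistent N ER ET theta delta f g Rr Tt Hpar Hf Hg Hsol Hinit Hpos J HJ
    HscR Hspec) as [c [Hc Hall]].
  exists c; split; [exact Hc|]; intros i Hi eps Heps.
  destruct (Hall i Hi) as [T0 HT0]; exists T0; intros t Ht; specialize (HT0 t Ht); lra.
Qed.
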